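(* Let $X\in\mathbb{R}^{M\times N_f}$, $W\in\mathbb{R}^{N_f\times N_p}$, and $P_f=(W(XW)^+X)^T$. Then $P_f$ is an (oblique) projector, $P_f^2=P_f$, and for any singular value decomposition $P_f=\sum_{i:\sigma_i>0}\sigma_i\vec{f}_{X,i}\vec{f}_{W,i}^T$ (with $\{\vec{f}_{X,i}\}$ orthonormal, $\{\vec{f}_{W,i}\}$ orthonormal, $\sigma_i>0$) one has $\vec{f}_{W,i}\cdot\vec{f}_{X,j}=\delta_{ij}\cos\theta_i$ with $\cos\theta_i=1/\sigma_i$, so that $$P_f=\sum_i\frac{1}{\cos\theta_i}\vec{f}_{X,i}\vec{f}_{W,i}^T,$$ and all projection deviation angles satisfy $\delta\phi_i=0$.
   Context: $(XW)^+$ is the Moore–Penrose pseudoinverse. The subspace orientation angle $\theta_i\in[0,\pi]$ is defined by $\cos\theta_i=\vec{f}_{X,i}\cdot\vec{f}_{W,i}$. The projection deviation angle $\delta\phi_i$ is defined by $\cos(\pi/2-\delta\phi_i)=\frac{\vec{f}_{W,i}\cdot(\sigma_i\vec{f}_{X,i}-\vec{f}_{W,i})}{\|\sigma_i\vec{f}_{X,i}-\vec{f}_{W,i}\|}$; when $\sigma_i\vec{f}_{X,i}-\vec{f}_{W,i}=0$ (which happens when $\theta_i=0$) it is undefined and by convention taken to be $0$. *)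

From mathcomp Require Import all_boot all_order all_algebra.
From mathcomp Require Import all_classical all_reals all_analysis.
Set Implicit Arguments. Unset Strict Implicit. Unset Printing Implicit Defensive.
Import Order.TTheory GRing.Theory Num.Theory.
Local Open Scope ring_scope.

(* Moore–Penrose pseudoinverse, characterized by the four Penrose equations
   (it is the unique matrix satisfying them). *)
Definition is_MP_pinv {R : realType} {m n : nat}
  (A : 'M[R]_(m, n)) (B : 'M[R]_(n, m)) : Prop :=
  [/\ A *m B *m A = A, B *m A *m B = B,
      (A *m B)^T = A *m B & (B *m A)^T = B *m A].

Definition vdot {R : realType} {n : nat} (u v : 'cV[R]_n) : R :=
  \sum_(k < n) u k 0 * v k 0.
Definition vnorm {R : realType} {n : nat} (u : 'cV[R]_n) : R :=
  Num.sqrt (vdot u u).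

Definition orient_angle {R : realType} {n : nat} (fX fW : 'cV[R]_n) : R :=
  acos (vdot fX fW).

(* projection deviation angle delta_phi:
   cos (pi/2 - dphi) = fW . (s fX - fW) / || s fX - fW ||,
   i.e. dphi = pi/2 - acos(...); by convention 0 when s fX - fW = 0. *)
Definition proj_dev_angle {R : realType} {n : nat} (s : R) (fX fW : 'cV[R]_n) : R :=
  let d := s *: fX - fW in
  if d == 0 then 0 else pi / 2 - acos (vdot fW d / vnorm d).

(* Idempotency of [P := W (XW)^+ X] only uses the Penrose equation
   [(XW)^+ (XW) (XW)^+ = (XW)^+]. Writing an SVD of [P^T] as [FX D FW^T] with
   orthonormal columns, compressing [P^T P^T = P^T] between [FX^T] and [FW]
   gives [D (FW^T FX) D = D], so [FW^T FX = D^-1]: the singular vectors are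
   biorthogonal with [fW_i . fX_i = 1 / sigma_i]. This number lies in (0, 1]
   because [2 u.v <= |u|^2 + |v|^2] for unit vectors, so it is
   [cos theta_i], and [fW_i] is orthogonal to [sigma_i fX_i - fW_i], which
   makes every deviation angle vanish. *)
From mathcomp Require Import all_boot all_order all_algebra.
From mathcomp Require Import all_classical all_reals all_analysis.
From mathcomp Require Import ring lra.
Set Implicit Arguments. Unset Strict Implicit. Unset Printing Implicit Defensive.
Import Order.TTheory GRing.Theory Num.Theory.
Local Open Scope ring_scope.

Lemma mulmx_pinv_idem (R : pzRingType) m n p (X : 'M[R]_(m, n))
    (W : 'M[R]_(n, p)) (B : 'M[R]_(p, m)) :
  B *m (X *m W) *m B = B -> W *m B *m X *m (W *m B *m X) = W *m B *m X.
Proof. by move=> BAB; rewrite -[in RHS]BAB !mulmxA. Qed.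

Lemma trmx_idem (R : comPzRingType) n (P : 'M[R]_n) :
  P *m P = P -> P^T *m P^T = P^T.
Proof. by move=> PP; rewrite -trmx_mul PP. Qed.

Lemma sum_scale_col_mul_trE (R : comPzRingType) n r (A B : 'M[R]_(n, r))
    (s : 'I_r -> R) :
  \sum_(i < r) s i *: (col i A *m (col i B)^T)
    = A *m diag_mx (\row_i s i) *m B^T.
Proof.
apply/matrixP => a b; rewrite mul_mx_diag summxE !mxE.
apply: eq_bigr => k _; rewrite !mxE big_ord1 !mxE.
by rewrite mulrA [s k * _]mulrC.
Qed.

Lemma idem_orthonormal_factor (R : pzRingType) n r (FX FW : 'M[R]_(n, r))
    (D : 'M[R]_r) :
  FX^T *m FX = 1%:M -> FW^T *m FW = 1%:M ->
  FX *m D *m FW^T *m (FX *m D *m FW^T) = FX *m D *m FW^T ->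
  D *m (FW^T *m FX) *m D = D.
Proof.
move=> FXo FWo /(congr1 (fun A => FX^T *m A *m FW)).
rewrite !mulmxA FXo mul1mx -!(mulmxA _ FW^T FW) FWo !mulmx1.
by rewrite -!(mulmxA _ FW^T FX) => ->.
Qed.

Lemma diag_sandwich_inv (F : fieldType) r (s : 'I_r -> F) (G : 'M[F]_r) :
  (forall i, s i != 0) ->
  diag_mx (\row_i s i) *m G *m diag_mx (\row_i s i) = diag_mx (\row_i s i) ->
  G = diag_mx (\row_i (s i)^-1).
Proof.
move=> s_neq0 /matrixP DGD; apply/matrixP => i j.
move: (DGD i j); rewrite mul_mx_diag mul_diag_mx !mxE.
have [<- | _] := eqVneq i j; rewrite ?mulr1n ?mulr0n => e.
  by apply: (mulfI (s_neq0 i)); apply: (mulIf (s_neq0 i)); rewrite e mulfV ?mul1r.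
by apply/eqP; move/eqP: e; rewrite !mulf_eq0 !(negPf (s_neq0 _)) orbF.
Qed.

Section DotProduct.
Variable R : realType.

Lemma vdotC n (u v : 'cV[R]_n) : vdot u v = vdot v u.
Proof. by apply: eq_bigr => k _; rewrite mulrC. Qed.

Lemma vdot_colE n r (A B : 'M[R]_(n, r)) i j :
  vdot (col i A) (col j B) = (A^T *m B) i j.
Proof. by rewrite /vdot !mxE; apply: eq_bigr => k _; rewrite !mxE. Qed.

Lemma vdotBZr n (u v w : 'cV[R]_n) a :
  vdot u (a *: v - w) = a * vdot u v - vdot u w.
Proof. by rewrite /vdot mulr_sumr -sumrB; apply: eq_bigr => k _; rewrite !mxE; ring. Qed.

Lemma vdot_le_mean n (u v : 'cV[R]_n) : 2 * vdot u v <= vdot u u + vdot v v.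
Proof.
have : 0 <= \sum_k (u k 0 - v k 0) ^+ 2 by apply: sumr_ge0 => k _; exact: sqr_ge0.
suff -> : \sum_k (u k 0 - v k 0) ^+ 2 = vdot u u + vdot v v - 2 * vdot u v.
  by rewrite subr_ge0.
rewrite /vdot mulr_sumr -big_split -sumrB; apply: eq_bigr => k _ /=; ring.
Qed.

Lemma cos_orient_angle n (u v : 'cV[R]_n) :
  -1 <= vdot u v <= 1 -> cos (orient_angle u v) = vdot u v.
Proof. by move=> uv; rewrite /orient_angle acosK // in_itv. Qed.

Lemma proj_dev_angle_eq0 n s (fX fW : 'cV[R]_n) :
  vdot fW fW = 1 -> s * vdot fW fX = 1 -> proj_dev_angle s fX fW = 0.
Proof.
move=> fW1 sfWX; rewrite /proj_dev_angle; case: ifP => // _.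
by rewrite vdotBZr fW1 sfWX subrr mul0r acos0 subrr.
Qed.

End DotProduct.

Theorem theorem5 (R : realType) (M Nf Np : nat)
  (X : 'M[R]_(M, Nf)) (W : 'M[R]_(Nf, Np)) (XWp : 'M[R]_(Np, M))
  (hXWp : is_MP_pinv (X *m W) XWp) :
  let Pf := (W *m XWp *m X)^T in
  Pf *m Pf = Pf /\
  forall (r : nat) (FX FW : 'M[R]_(Nf, r)) (sigma : 'I_r -> R),
    (forall i, 0 < sigma i) ->
    FX^T *m FX = 1%:M ->
    FW^T *m FW = 1%:M ->
    Pf = \sum_(i < r) sigma i *: (col i FX *m (col i FW)^T) ->
    [/\ (forall i j : 'I_r, vdot (col i FW) (col j FX) =
           (if i == j then cos (orient_angle (col i FX) (col i FW)) else 0)),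
        (forall i : 'I_r, cos (orient_angle (col i FX) (col i FW)) = 1 / sigma i),
        Pf = \sum_(i < r) (1 / cos (orient_angle (col i FX) (col i FW)))
                            *: (col i FX *m (col i FW)^T)
      & (forall i : 'I_r, proj_dev_angle (sigma i) (col i FX) (col i FW) = 0)].
Proof.
move=> Pf; have [_ pinv_idem _ _] := hXWp.
have PfPf : Pf *m Pf = Pf by apply/trmx_idem/mulmx_pinv_idem.
split=> // r FX FW s s_gt0 FXo FWo Pf_svd.
have s_neq0 i : s i != 0 by rewrite gt_eqF.
have biorth : FW^T *m FX = diag_mx (\row_i (s i)^-1).
  apply: diag_sandwich_inv => //; apply: idem_orthonormal_factor => //.
  by rewrite -sum_scale_col_mul_trE -Pf_svd.
have dotWX i j : vdot (col i FW) (col j FX) = if i == j then 1 / s i else 0.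
  by rewrite vdot_colE biorth !mxE div1r; case: eqP => [->|].
have cosE i : cos (orient_angle (col i FX) (col i FW)) = 1 / s i.
  have dot_gt0 : 0 < 1 / s i by rewrite div1r invr_gt0.
  have dot_le1 : 1 / s i <= 1.
    have := vdot_le_mean (col i FW) (col i FX).
    by rewrite dotWX eqxx !vdot_colE FXo FWo !mxE eqxx mulr1n; lra.
  by rewrite cos_orient_angle vdotC dotWX eqxx //; lra.
split=> [i j | // | | i].
- by rewrite dotWX; case: eqP => [->|//]; rewrite cosE.
- by rewrite Pf_svd; apply: eq_bigr => i _; rewrite cosE !div1r invrK.
- apply: proj_dev_angle_eq0; first by rewrite vdot_colE FWo mxE eqxx.
  by rewrite dotWX eqxx mulrC div1r mulVf.
Qed.
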